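(* Let $R$ be a finite commutative Frobenius ring of characteristic $2$ and let $B$ and $C$ be $n\times n$ matrices over $R$. Let $M$ be the $2n\times 4n$ matrix $$M=\left(\, I_{2n} \;\middle|\; \begin{matrix} B & C\\ C & B\end{matrix}\,\right).$$ Then the code generated by $M$ (the $R$-submodule of $R^{4n}$ spanned by the rows of $M$) is self-dual if and only if $(B+C)(B+C)^T=I_n$ and $BC^T=CB^T$.
   Context: A linear code of length $N$ over $R$ is an $R$-submodule $\mathcal{C}\subseteq R^N$; its dual is $\mathcal{C}^\perp=\{x\in R^N : \langle x,c\rangle=0 \text{ for all } c\in\mathcal{C}\}$ with respect to the Euclidean inner product $\langle x,y\rangle=\sum_i x_iy_i$, and $\mathcal{C}$ is self-dual if $\mathcal{C}=\mathcal{C}^\perp$. *)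

From mathcomp Require Import all_boot all_order all_algebra all_field.
Set Implicit Arguments. Unset Strict Implicit. Unset Printing Implicit Defensive.
Import GRing.Theory Num.Theory.
Local Open Scope ring_scope.

(* A generating character of a finite ring R (Wood): an additive character
   chi : (R,+) -> C^* whose kernel contains no nonzero ideal. *)
Definition generating_character (R : finComNzRingType) (chi : R -> algC) : Prop :=
  chi 0 = 1 /\ (forall a b : R, chi (a + b) = chi a * chi b) /\
  (forall a : R, a != 0 -> exists r : R, chi (r * a) != 1).

(* A finite (commutative) ring is Frobenius iff it admits a generating character. *)
Definition frobenius_ring (R : finComNzRingType) : Prop :=
  exists chi : R -> algC, generating_character chi.

Definition gen_code (R : finComNzRingType) (k N : nat) (G : 'M[R]_(k, N))
  (x : 'rV[R]_N) : Prop := exists u : 'rV[R]_k, x = u *m G.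

Definition dual_code (R : finComNzRingType) (N : nat) (C : 'rV[R]_N -> Prop)
  (x : 'rV[R]_N) : Prop := forall c, C c -> \sum_(i < N) x 0 i * c 0 i = 0.

Definition self_dual (R : finComNzRingType) (N : nat) (C : 'rV[R]_N -> Prop) : Prop :=
  forall x, C x <-> dual_code C x.

From mathcomp Require Import all_boot all_order all_algebra all_field.
Import GRing.Theory.
Local Open Scope ring_scope.

(* The generator matrix is in systematic form (I | A), so the code is
   self-dual iff A A^T = -I: self-orthogonality of the rows says I + A A^T = 0,
   and conversely a word x orthogonal to all rows satisfies x_l = - x_r A^T, so
   x = x_l (I | A) because A^T A = -I as well.  For A = [B C; C B] the product
   A A^T has diagonal blocks B B^T + C C^T and off-diagonal blocks
   B C^T + C B^T; in characteristic 2 the condition A A^T = I therefore reads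
   (B + C)(B + C)^T = I and B C^T = C B^T. *)

Section GeneratedCode.

Variables (R : finComNzRingType) (k N : nat) (G : 'M[R]_(k, N)).

Lemma dot_mulmx_tr (x c : 'rV[R]_N) :
  \sum_(i < N) x 0 i * c 0 i = (x *m c^T) 0 0.
Proof. by rewrite mxE; apply: eq_bigr => i _; rewrite mxE. Qed.

Lemma gen_code_row (i : 'I_k) : gen_code G (row i G).
Proof. by exists (delta_mx 0 i); rewrite rowE. Qed.

Lemma dual_gen_codeP (x : 'rV[R]_N) :
  reflect (dual_code (gen_code G) x) (x *m G^T == 0).
Proof.
apply: (iffP eqP) => [xG c [u ->] | dx].
  by rewrite dot_mulmx_tr trmx_mul mulmxA xG mul0mx mxE.
apply/matrixP => i j; rewrite (ord1 i) [RHS]mxE -(dx _ (gen_code_row j)).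
by rewrite mxE; apply: eq_bigr => l _; rewrite !mxE.
Qed.

Lemma self_dual_mulmx_tr : self_dual (gen_code G) -> G *m G^T = 0.
Proof.
move=> sd; apply/row_matrixP => i; rewrite row_mul row0.
by apply/eqP/dual_gen_codeP/sd/gen_code_row.
Qed.

End GeneratedCode.

Section SystematicCode.

Variables (R : finComNzRingType) (m : nat) (A : 'M[R]_m).

Lemma mul_systematic_tr :
  row_mx 1%:M A *m (row_mx 1%:M A)^T = 1%:M + A *m A^T.
Proof. by rewrite tr_row_mx mul_row_col trmx1 mulmx1. Qed.

Lemma self_dual_systematicP :
  self_dual (gen_code (row_mx 1%:M A)) <-> A *m A^T = - 1%:M.
Proof.
split=> [/self_dual_mulmx_tr | AAt x].
  by rewrite mul_systematic_tr addrC => /eqP; rewrite addr_eq0 => /eqP.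
split=> [[u ->] | /dual_gen_codeP].
  by apply/dual_gen_codeP; rewrite -mulmxA mul_systematic_tr AAt subrr mulmx0.
have AtA : A^T *m A = - 1%:M.
  apply/eqP; rewrite -eqr_oppLR; apply/eqP; rewrite -mulNmx.
  by apply: mulmx1C; rewrite mulmxN AAt opprK.
rewrite -[x]hsubmxK tr_row_mx mul_row_col trmx1 mulmx1 addr_eq0 => /eqP xl.
exists (lsubmx x).
by rewrite mul_mx_row mulmx1 {3}xl mulNmx -mulmxA AtA mulmxN mulmx1 opprK.
Qed.

End SystematicCode.

Section CharacteristicTwo.

Variables (R : comNzRingType) (n : nat).
Hypothesis pchar2R : 2 \in [pchar R].

Lemma oppmx_pchar2 {p q} (M : 'M[R]_(p, q)) : - M = M.
Proof. by apply/matrixP => i j; rewrite mxE oppr_pchar2. Qed.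

Lemma addmx_pchar2 {p q} (M : 'M[R]_(p, q)) : M + M = 0.
Proof. by rewrite -{1}(oppmx_pchar2 M) addNr. Qed.

Lemma mul_block_circ_tr (B C : 'M[R]_n) :
  block_mx B C C B *m (block_mx B C C B)^T =
  block_mx (B *m B^T + C *m C^T) (B *m C^T + C *m B^T)
           (B *m C^T + C *m B^T) (B *m B^T + C *m C^T).
Proof.
by rewrite tr_block_mx mulmx_block; congr block_mx; apply: addrC.
Qed.

Lemma block_circ_mul_tr_eq1 (B C : 'M[R]_n) :
  block_mx B C C B *m (block_mx B C C B)^T = 1%:M <->
  (B + C) *m (B + C)^T = 1%:M /\ B *m C^T = C *m B^T.
Proof.
have sum_eq0 (M M' : 'M[R]_n) : (M + M' == 0) = (M == M').
  by rewrite addr_eq0 oppmx_pchar2.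
have expand : (B + C) *m (B + C)^T
              = (B *m B^T + C *m C^T) + (B *m C^T + C *m B^T).
  by rewrite linearD /= mulmxDl !mulmxDr (addrC (C *m B^T)) addrACA.
rewrite mul_block_circ_tr scalar_mx_block expand.
split=> [/eq_block_mx [-> T0 _ _] | [+ BCt]].
  by split; [rewrite T0 addr0 | apply/eqP; rewrite -sum_eq0 T0].
by rewrite BCt addmx_pchar2 addr0 => ->.
Qed.

End CharacteristicTwo.

Theorem mainTheorem1 (R : finComNzRingType) (n : nat) (B C : 'M[R]_n) :
  frobenius_ring R -> (2%:R : R) = 0 ->
  self_dual (gen_code (row_mx (1%:M : 'M[R]_(n + n)) (block_mx B C C B)))
  <-> ((B + C) *m (B + C)^T = 1%:M /\ B *m C^T = C *m B^T).
Proof.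
(* The generator matrix is systematic. *)
move=> _ two0.
have pchar2R : 2 \in [pchar R] by rewrite inE /= two0 eqxx.
apply: (iff_trans (self_dual_systematicP _ _ _)).
by rewrite oppmx_pchar2 //; apply: block_circ_mul_tr_eq1.
Qed.
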